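(* Let $m > 1$ be an integer and $a$ a non-negative integer. Then the congruence class of $a$ modulo $m$ contains infinitely many $\pi/4$-congruent numbers that are pairwise inequivalent modulo $(\mathbb{Q}^\times)^2$. The same statement holds for $3\pi/4$-congruent numbers.
   Context: For $\theta \in \{\pi/4,3\pi/4\}$, a positive integer $n$ is $\theta$-congruent if there exist positive rationals $a,b,c$ such that the triangle with sides $a$, $b\sqrt2$, $c$ has angle $\theta$ opposite $c$ and area $n$; equivalently $ab = 2n$ and $c^2 = a^2+2b^2-2ab$ (for $\theta = \pi/4$), resp. $c^2 = a^2+2b^2+2ab$ (for $\theta=3\pi/4$). *)

From mathcomp Require Import all_boot all_order all_algebra.
Set Implicit Arguments. Unset Strict Implicit. Unset Printing Implicit Defensive.
Import Order.TTheory GRing.Theory Num.Theory.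
Local Open Scope ring_scope.

Inductive angle := PiOver4 | ThreePiOver4.

(* cos(theta) * sqrt 2 * 2: the law of cosines term for sides a, b*sqrt2 with
   angle theta between them is  c^2 = a^2 + 2 b^2 - 2 * a * (b sqrt 2) cos theta,
   i.e. -2ab for pi/4 and +2ab for 3pi/4. *)
Definition cos_sign (t : angle) : rat :=
  match t with PiOver4 => 1 | ThreePiOver4 => -1 end.

Definition theta_congruent (t : angle) (n : nat) : Prop :=
  (0 < n)%N /\
  exists a b c : rat, 0 < a /\ 0 < b /\ 0 < c /\
    a * b = 2 * n%:R /\
    c ^+ 2 = a ^+ 2 + 2 * b ^+ 2 - 2 * cos_sign t * a * b.

Definition sq_class_equiv (n n' : nat) : Prop :=
  exists q : rat, q != 0 /\ (n%:R : rat) = q ^+ 2 * n'%:R.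

From mathcomp Require Import all_boot all_order all_algebra.
From mathcomp Require Import zify ring lra.
Set Implicit Arguments. Unset Strict Implicit. Unset Printing Implicit Defensive.
Import Order.TTheory GRing.Theory Num.Theory.

(* Let s = cos_sign t, P = m^2 Y and h = (P + s)^2 - 2.  The triangle with sides
   h/m, (2P/m) sqrt 2 and (P^2 + 1)/m has angle theta and area Y h, so Y h is
   theta-congruent; moreover P divides h + 1 = (P + s - 1)(P + s + 1), hence
   h^2 = 1 mod m.  Starting from Y_0 = -a mod m and iterating
   Y_(j+1) = Y_j h_j^2 keeps Y_j = Y_0 mod m, so f_j = Y_j h_j = a mod m.
   For i < j, f_i divides Y_j, which divides h_j + 1; thus h_j is coprime to
   f_i Y_j, and a square f_i f_j = h_j (f_i Y_j) would make h_j a square,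
   which it is not since (X - 1)^2 < X^2 - 2 < X^2. *)

Lemma gcdnXX k x z : gcdn (x ^ k) (z ^ k) = gcdn x z ^ k.
Proof.
have [g0 | g_gt0] := posnP (gcdn x z).
  have /eqP x0 : x == 0 by rewrite -dvd0n -g0 dvdn_gcdl.
  have /eqP z0 : z == 0 by rewrite -dvd0n -g0 dvdn_gcdr.
  by rewrite x0 z0 !gcdnn.
set g := gcdn x z in g_gt0 *.
have [x' Ex] : exists x', x = x' * g by apply/dvdnP; apply: dvdn_gcdl.
have [z' Ez] : exists z', z = z' * g by apply/dvdnP; apply: dvdn_gcdr.
have cop : coprime x' z'.
  by rewrite /coprime -(eqn_pmul2r g_gt0) mul1n muln_gcdl -Ex -Ez.
by rewrite Ex Ez !expnMn -muln_gcdl (eqP (coprimeXr k (coprimeXl k cop))) mul1n.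
Qed.

Lemma coprime_mul_sqr_l x y z : coprime x y -> x * y = z ^ 2 -> exists g, x = g ^ 2.
Proof.
move=> cop Exy; exists (gcdn x z).
by rewrite -gcdnXX -Exy expnS expn1 -muln_gcdr (eqP cop) muln1.
Qed.

Lemma sqr_rat_nat (N : nat) (r : rat) : (N%:R = r ^+ 2)%R -> exists k, N = k ^ 2.
Proof.
move=> EN; set n := `|numq r|; set d := `|denq r|.
have Ez : (N%:Z * denq r ^+ 2 = numq r ^+ 2)%R.
  apply: (@intr_inj rat); rewrite rmorphM !rmorphXn /= -pmulrn EN.
  have dq_neq0 : ((denq r)%:~R != 0 :> rat)%R by rewrite intr_eq0 denq_neq0.
  by rewrite -{1}(divq_num_den r); field.
have En : N * d ^ 2 = n ^ 2 by rewrite /n /d -!abszX -Ez abszM.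
have : coprime (d ^ 2) (d ^ 2).
  apply: coprime_dvdl (dvdn_mull N (dvdnn _)) _.
  by rewrite En coprimeXl // coprimeXr // coprime_num_den.
rewrite /coprime gcdnn => /eqP d2_eq1.
by exists n; rewrite -En d2_eq1 muln1.
Qed.

Lemma coprime_dvdn_succ d x : d %| x.+1 -> coprime x d.
Proof. by move=> dvd_d; apply: coprime_dvdr dvd_d (coprimenS x). Qed.

Lemma sqr_modn1 m x : m %| x.+1 -> x ^ 2 = 1 %[mod m].
Proof.
move=> dvd_m; have E : x ^ 2 + x.+1 = x * x.+1 + 1 by ring.
have x1_mod : x.+1 %% m = 0 by apply/eqP.
apply/eqP; rewrite -(eqn_modDr x.+1) E -modnDml -modnMmr -[in X in _ == X]modnDmr.
by rewrite x1_mod muln0 addn0 mod0n.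
Qed.

Lemma subn2_sqr_neq_sqr X g : 2 <= X -> X ^ 2 - 2 <> g ^ 2.
Proof. by move=> X_ge2 E; have [X_le_g | g_lt_X] := leqP X g; nia. Qed.

Definition theta_shift (t : angle) (P : nat) : nat :=
  match t with PiOver4 => P.+1 | ThreePiOver4 => P.-1 end.

Definition cofactor (t : angle) (P : nat) : nat := theta_shift t P ^ 2 - 2.

Section Cofactor.

Variables (t : angle) (P : nat).
Hypothesis P_gt2 : 2 < P.

Lemma theta_shift_ge2 : 2 <= theta_shift t P.
Proof. by case: t => /=; lia. Qed.

Lemma cofactor_gt0 : 0 < cofactor t P.
Proof. by have := theta_shift_ge2; rewrite /cofactor; nia. Qed.

Lemma cofactor_neq_sqr g : cofactor t P <> g ^ 2.
Proof. exact: subn2_sqr_neq_sqr theta_shift_ge2. Qed.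

Lemma dvdn_cofactor_succ : P %| (cofactor t P).+1.
Proof.
apply/dvdnP; rewrite /cofactor; case: t => /=.
  by exists P.+2; nia.
by exists (P - 2); nia.
Qed.

Lemma coprime_cofactor d : d %| P -> coprime (cofactor t P) d.
Proof.
by move=> dvd_dP; apply/coprime_dvdn_succ/(dvdn_trans dvd_dP)/dvdn_cofactor_succ.
Qed.

Local Open Scope ring_scope.

Lemma natr_cofactor : (cofactor t P)%:R = (P%:R + cos_sign t) ^+ 2 - 2 :> rat.
Proof.
have ts_ge2 := theta_shift_ge2; rewrite /cofactor natrB ?natrX; last by nia.
by case: t ts_ge2 => /= ?; rewrite ?natr1 // -subn1 natrB //; lia.
Qed.

(* With h = (P + s)^2 - 2, the side c comes from
   (h - 2 s P)^2 + (2 P)^2 = (P^2 - 1)^2 + (2 P)^2 = (P^2 + 1)^2. *)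
Lemma theta_congruent_mul_cofactor {m Y : nat} :
  (0 < m)%N -> P = (m ^ 2 * Y)%N -> theta_congruent t (Y * cofactor t P).
Proof.
move=> m_gt0 EP; have h_gt0 := cofactor_gt0.
split; first by rewrite muln_gt0 h_gt0 andbT; move: P_gt2; rewrite EP; nia.
have m_pos : 0 < m%:R :> rat by rewrite ltr0n.
have P_pos : 0 < P%:R :> rat by rewrite ltr0n; lia.
exists ((cofactor t P)%:R / m%:R), (2 * P%:R / m%:R), ((P%:R ^+ 2 + 1) / m%:R).
do 3 (split; first by apply: divr_gt0; rewrite ?ltr0n //; nra).
have m_neq0 : m%:R != 0 :> rat by rewrite lt0r_neq0.
split; first by rewrite natrM EP natrM natrX; field.
by rewrite natr_cofactor; case: t => /=; field.
Qed.

End Cofactor.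

Section Sequence.

Variables (t : angle) (m y0 : nat).
Hypotheses (m_gt1 : 1 < m) (y0_gt0 : 0 < y0).

Fixpoint seed j : nat :=
  if j is i.+1 then seed i * cofactor t (m ^ 2 * seed i) ^ 2 else y0.

Definition cong_number j : nat := seed j * cofactor t (m ^ 2 * seed j).

Lemma seed_gt0 j : 0 < seed j.
Proof.
elim: j => //= j IHj; rewrite muln_gt0 IHj expn_gt0 cofactor_gt0 //; nia.
Qed.

Lemma base_seed_gt2 j : 2 < m ^ 2 * seed j.
Proof. by have := seed_gt0 j; nia. Qed.

Lemma dvdn_seed i j : i <= j -> seed i %| seed j.
Proof.
elim: j => [|j IHj]; first by rewrite leqn0 => /eqP ->.
rewrite leq_eqVlt ltnS => /orP[/eqP -> // | le_ij].
exact: dvdn_mulr (IHj le_ij).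
Qed.

Lemma dvdn_cong_number_seed i j : i < j -> cong_number i %| seed j.
Proof.
move=> lt_ij; apply: dvdn_trans (dvdn_seed lt_ij).
by rewrite /cong_number /= dvdn_pmul2l ?seed_gt0 // dvdn_exp.
Qed.

Lemma dvdn_m_cofactor_succ j : m %| (cofactor t (m ^ 2 * seed j)).+1.
Proof.
apply: dvdn_trans (dvdn_cofactor_succ t (base_seed_gt2 j)).
by rewrite expnS -mulnA dvdn_mulr.
Qed.

Lemma seed_mod j : seed j = y0 %[mod m].
Proof.
elim: j => //= j IHj.
rewrite -modnMml IHj modnMml -modnMmr sqr_modn1 ?dvdn_m_cofactor_succ //.
by rewrite modnMmr muln1.
Qed.

Lemma cong_number_add_y0_mod j : cong_number j + y0 = 0 %[mod m].
Proof.
rewrite -modnDmr -(seed_mod j) modnDmr /cong_number -mulnSr.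
by apply/eqP; rewrite mod0n -/(dvdn _ _) dvdn_mull // dvdn_m_cofactor_succ.
Qed.

Lemma theta_congruent_cong_number j : theta_congruent t (cong_number j).
Proof.
exact: (theta_congruent_mul_cofactor t (base_seed_gt2 j) (ltnW m_gt1) erefl).
Qed.

Lemma cong_number_mul_neq_sqr i j k :
  i < j -> cong_number i * cong_number j <> k ^ 2.
Proof.
move=> lt_ij Ek; set h := cofactor t (m ^ 2 * seed j).
have cop : coprime h (cong_number i * seed j).
  rewrite coprimeMr !coprime_cofactor ?base_seed_gt2 ?dvdn_mull //.
  exact: dvdn_cong_number_seed.
have [g Eg] : exists g, h = g ^ 2.
  apply: (coprime_mul_sqr_l (z := k)) cop _.
  by rewrite -Ek [cong_number j]/cong_number -/h mulnC -mulnA.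
exact: (cofactor_neq_sqr (base_seed_gt2 j) Eg).
Qed.

End Sequence.

Lemma sq_class_equiv_mul_sqr n n' : sq_class_equiv n n' -> exists k, n * n' = k ^ 2.
Proof.
move=> [q [_ En]]; apply: (@sqr_rat_nat _ (q * n'%:R)%R).
by rewrite natrM En exprMn expr2 !mulrA.
Qed.

Theorem theorem5p2 (m a : nat) :
  (1 < m)%N ->
  forall t : angle,
  exists f : nat -> nat,
    (forall i, theta_congruent t (f i) /\ f i = a %[mod m]) /\
    (forall i j, i <> j -> ~ sq_class_equiv (f i) (f j)).
Proof.
move=> m_gt1 t; pose y0 := m.-1 * a + m.
have y0_gt0 : 0 < y0 by rewrite addn_gt0 (ltnW m_gt1) orbT.
exists (cong_number t m y0); split=> [i | i j neq_ij /sq_class_equiv_mul_sqr [k Ek]].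
  split; first exact: theta_congruent_cong_number.
  apply/eqP; rewrite -(eqn_modDr y0) cong_number_add_y0_mod //.
  have -> : a + y0 = a.+1 * m by rewrite /y0; nia.
  by rewrite modnMl mod0n.
have [lt_ij | lt_ji] : i < j \/ j < i by lia.
  exact: (cong_number_mul_neq_sqr m_gt1 y0_gt0 lt_ij Ek).
by rewrite mulnC in Ek; exact: (cong_number_mul_neq_sqr m_gt1 y0_gt0 lt_ji Ek).
Qed.
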